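(* Let $(X_{s,t})$ be the INMA$(q_1,q_2)$ random field defined in the context, and let $k,l$ be integers with $0\le k\le q_1$, $0\le l\le q_2$. Then for all $(s,t)\in\mathbb{Z}^2$ and $u_1,u_2\in[-1,1]$, the bivariate pgf $\operatorname{pgf}(u_1,u_2;k,l):=\mathbb{E}\big(u_1^{X_{s,t}}u_2^{X_{s-k,t-l}}\big)$ equals $$\prod_{i=0}^{k-1}\prod_{j=0}^{q_2}\operatorname{pgf}_\varepsilon\big(1+\beta_{ij}(u_1-1)\big)\cdot\prod_{i=k}^{q_1}\prod_{j=0}^{l-1}\operatorname{pgf}_\varepsilon\big(1+\beta_{ij}(u_1-1)\big)$$ $$\cdot\prod_{i=q_1+1}^{q_1+k}\prod_{j=l}^{q_2+l}\operatorname{pgf}_\varepsilon\big(1+\beta_{i-k,j-l}(u_2-1)\big)\cdot\prod_{i=k}^{q_1}\prod_{j=q_2+1}^{q_2+l}\operatorname{pgf}_\varepsilon\big(1+\beta_{i-k,j-l}(u_2-1)\big)$$ $$\cdot\prod_{i=k}^{q_1}\prod_{j=l}^{q_2}\operatorname{pgf}_\varepsilon\Big(1+\beta_{ij}(u_1-1)+\beta_{i-k,j-l}(u_2-1)+p_{(i,j),(i-k,j-l)}\,(u_1-1)(u_2-1)\Big),$$ where empty products equal $1$. (For $k=l=0$ this reduces to the marginal pgf of $X_{s,t}$ evaluated at $u=u_1u_2$.)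
   Context: INMA$(q_1,q_2)$ random field: Fix $q_1,q_2\in\mathbb{N}_0$ with $q_1+q_2\ge 1$ and parameters $\beta_{ij}\in[0,1]$ for $0\le i\le q_1$, $0\le j\le q_2$; put $\beta_\bullet=\sum_{i=0}^{q_1}\sum_{j=0}^{q_2}\beta_{ij}$. Let $(\varepsilon_{s,t})_{s,t\in\mathbb{Z}}$ be i.i.d. random variables with values in $\mathbb{N}_0=\{0,1,2,\dots\}$, finite mean $\mu_\varepsilon$ and finite variance $\sigma_\varepsilon^2$, and let $\operatorname{pgf}_\varepsilon(u)=\mathbb{E}u^{\varepsilon_{s,t}}$. Let $\mathbf{Z}_{s,t;r}=(Z^{(i,j)}_{s,t;r})_{0\le i\le q_1,0\le j\le q_2}$, $s,t\in\mathbb{Z}$, $r\in\mathbb{N}$, be i.i.d. random vectors (distributed as a generic vector $\mathbf{Z}=(Z^{(i,j)})$), independent of $(\varepsilon_{s,t})$, whose components are Bernoulli with $\mathbb{P}(Z^{(i,j)}=1)=\beta_{ij}$; the components within one vector may be arbitrarily dependent. Write $p_{(i,j),(i',j')}:=\mathbb{P}(Z^{(i,j)}=1,\,Z^{(i',j')}=1)$. The binomial thinning of $\varepsilon_{s,t}$ executed at location $(s+i,t+j)$ is $\beta_{ij}\circ_{s+i,t+j}\varepsilon_{s,t}:=\sum_{r=1}^{\varepsilon_{s,t}}Z^{(i,j)}_{s,t;r}$ (empty sum $=0$). The field is $$X_{s,t}=\sum_{i=0}^{q_1}\sum_{j=0}^{q_2}\beta_{ij}\circ_{s,t}\varepsilon_{s-i,t-j}=\sum_{i=0}^{q_1}\sum_{j=0}^{q_2}\sum_{r=1}^{\varepsilon_{s-i,t-j}}Z^{(i,j)}_{s-i,t-j;r}.$$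 *)

From HB Require Import structures.
From mathcomp Require Import all_boot all_order all_algebra.
From mathcomp Require Import all_classical all_reals all_analysis.
Set Implicit Arguments. Unset Strict Implicit. Unset Printing Implicit Defensive.
Import Order.TTheory GRing.Theory Num.Theory.
Local Open Scope classical_set_scope.
Local Open Scope ring_scope.

Section INMA.
Context {R : realType} {d : measure_display} {Omega : measurableType d}.

Definition events_of {T : Type} (X : Omega -> T) : set (set Omega) :=
  [set X @^-1` B | B in [set: set T]].

Definition mutually_independent (P : probability Omega R) (I : eqType)
  (F : I -> set (set Omega)) : Prop :=
  forall (s : seq I) (A : I -> set Omega), uniq s ->
    (forall i, i \in s -> F i (A i)) ->
    fine (P (\big[setI/setT]_(i <- s) A i)) = \prod_(i <- s) fine (P (A i)).

(* the thinning vector Z_{s,t;r} as a finite function on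
   {0..q1} x {0..q2}; Z s t r w i j is the component Z^{(i,j)}_{s,t;r+1} *)
Definition Zvec (q1 q2 : nat) (Z : int -> int -> nat -> Omega -> nat -> nat -> bool)
  (s t : int) (r : nat) : Omega -> {ffun 'I_q1.+1 * 'I_q2.+1 -> bool} :=
  fun w => [ffun ij : 'I_q1.+1 * 'I_q2.+1 => Z s t r w ij.1 ij.2].

(* index set of the whole family: the innovations eps_{s,t} and the vectors Z_{s,t;r} *)
Definition inma_index := ((int * int) + (int * int * nat))%type.

Definition inma_events (q1 q2 : nat) (eps : int -> int -> Omega -> nat)
  (Z : int -> int -> nat -> Omega -> nat -> nat -> bool) (a : inma_index)
  : set (set Omega) :=
  match a with
  | inl (s, t) => events_of (eps s t)
  | inr (s, t, r) => events_of (Zvec q1 q2 Z s t r)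
  end.

Definition inma_X (q1 q2 : nat) (eps : int -> int -> Omega -> nat)
  (Z : int -> int -> nat -> Omega -> nat -> nat -> bool) (s t : int) (w : Omega) : nat :=
  \sum_(0 <= i < q1.+1) \sum_(0 <= j < q2.+1)
     \sum_(r < eps (s - i%:Z)%R (t - j%:Z)%R w)
        (Z (s - i%:Z)%R (t - j%:Z)%R r w i j : nat).

Definition pgf_eps (P : probability Omega R) (eps : int -> int -> Omega -> nat) (u : R) : R :=
  fine (\int[P]_w (u ^+ eps 0 0 w)%:E).

Definition pZ (P : probability Omega R) (Z : int -> int -> nat -> Omega -> nat -> nat -> bool)
  (i j i' j' : nat) : R :=
  fine (P [set w | Z 0 0 0%N w i j && Z 0 0 0%N w i' j']).

End INMA.

(* Group the terms of X_{s,t} and X_{s-k,t-l} according to the innovation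
   eps_L they thin.  Given eps_L = n, the factor of u1^X_{s,t} u2^X_{s-k,t-l}
   contributed by the site L is a product of n independent copies of
   u1^b u2^b', where b and b' are the (possibly absent) components of a thinning
   vector used by the two fields; each copy has mean
   m = 1 + beta (u1 - 1) + beta' (u2 - 1) + p (u1 - 1) (u2 - 1), so averaging
   over eps_L gives pgf_eps(m).  Distinct sites involve disjoint independent
   families, so the bivariate pgf is the product of these factors over the
   sites; sorting the sites by which of b, b' exist gives the five products.
   As eps is unbounded, the independence computations are carried out on the
   truncations eps_L <= N, where every integrand is a finite combination of
   indicators of independent events, and N is then sent to infinity by
   dominated convergence (all the integrands are bounded by 1). *)

From HB Require Import structures.
From mathcomp Require Import all_boot all_order all_algebra.
From mathcomp Require Import all_classical all_reals all_analysis.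
From mathcomp Require Import ring zify measurable_realfun.
Set Implicit Arguments. Unset Strict Implicit. Unset Printing Implicit Defensive.
Import Order.TTheory GRing.Theory Num.Theory.
Import numFieldNormedType.Exports.
Local Open Scope classical_set_scope.
Local Open Scope ring_scope.

Lemma norm_expr_le1 (R : numDomainType) (u : R) n : `|u| <= 1 -> `|u ^+ n| <= 1.
Proof. by move=> u1; rewrite normrX exprn_ile1. Qed.

Lemma norm_prod_le1 (R : numDomainType) (T : Type) (s : seq T) (f : T -> R) :
  (forall x, `|f x| <= 1) -> `|\prod_(x <- s) f x| <= 1.
Proof. by move=> f1; rewrite normr_prod prodr_ile1 // => x _; rewrite normr_ge0 f1. Qed.

Lemma big_iota_indicator (R : pzSemiRingType) (h : nat -> R) k N :
  \sum_(n <- iota 0 N.+1) (k == n)%:R * h n = (k <= N)%:R * h k.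
Proof.
case: (leqP k N) => [kN|Nk].
  rewrite (bigD1_seq k) ?iota_uniq ?mem_iota //= eqxx mul1r big1 ?addr0 // => n.
  by rewrite eq_sym => /negbTE ->; rewrite mul0r.
rewrite big_seq big1 ?mul0r // => n; rewrite mem_iota add0n ltnS => nN.
have /negbTE -> : k != n by rewrite neq_ltn (leq_ltn_trans nN Nk) orbT.
by rewrite mul0r.
Qed.

Lemma prod_nat_eq1 (R : pzSemiRingType) (g : nat -> R) m n :
  (forall i, (m <= i < n)%N -> g i = 1) -> \prod_(m <= i < n) g i = 1.
Proof. by move=> g1; rewrite big_nat_cond big1 // => i /andP[/g1]. Qed.

Lemma prod_window (R : pzSemiRingType) (g : nat -> R) m n i0 : (n + i0 <= m)%N ->
  (forall i, ~~ (i0 <= i < n + i0)%N -> g i = 1) ->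
  \prod_(0 <= i < m) g i = \prod_(0 <= i < n) g (i + i0)%N.
Proof.
move=> nm g1; rewrite (@big_cat_nat _ _ _ i0) //; last exact: leq_trans (leq_addl n i0) nm.
rewrite (@big_cat_nat _ _ _ (n + i0) i0) ?leq_addl //=.
have low : \prod_(0 <= i < i0) g i = 1.
  by apply: prod_nat_eq1 => i /andP[_ ii0]; apply: g1; rewrite leqNgt ii0.
have high : \prod_(n + i0 <= i < m) g i = 1.
  by apply: prod_nat_eq1 => i /andP[ni _]; apply: g1; rewrite negb_and orbC -leqNgt ni.
by rewrite low high mul1r mulr1 -{1}[i0]add0n big_addn addnK.
Qed.

Lemma prod_window2 (R : pzSemiRingType) (g : nat -> nat -> R) m1 m2 n1 n2 i0 j0 :
  (n1 + i0 <= m1)%N -> (n2 + j0 <= m2)%N ->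
  (forall i j, ~~ ((i0 <= i < n1 + i0) && (j0 <= j < n2 + j0))%N -> g i j = 1) ->
  \prod_(0 <= i < m1) \prod_(0 <= j < m2) g i j =
  \prod_(0 <= i < n1) \prod_(0 <= j < n2) g (i + i0)%N (j + j0)%N.
Proof.
move=> n1m1 n2m2 g1; rewrite (prod_window n1m1) => [|i ii0]; last first.
  by rewrite big1 // => j _; apply: g1; rewrite negb_and ii0.
apply: eq_bigr => i _; rewrite (prod_window n2m2) // => j jj0.
by apply: g1; rewrite negb_and jj0 orbT.
Qed.

Lemma eq_big_In (R T : Type) (idx : R) (op : R -> R -> R) (l : seq T) (f g : T -> R) :
  (forall x, List.In x l -> f x = g x) ->
  \big[op/idx]_(x <- l) f x = \big[op/idx]_(x <- l) g x.
Proof.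
elim: l => [|x l IH] fg; first by rewrite !big_nil.
rewrite !big_cons fg /=; last by left.
by rewrite IH // => y ly; apply: fg; right.
Qed.

Lemma In_allpairs (T1 T2 T : Type) (f : T1 -> T2 -> T) l1 l2 z :
  List.In z [seq f x y | x <- l1, y <- l2] ->
  exists x y, [/\ List.In x l1, List.In y l2 & z = f x y].
Proof.
elim: l1 => [|x l1 IH] //= zin; have [|] := List.in_app_or _ _ _ zin.
  by move=> /List.in_map_iff [y [<- ly]]; exists x, y; split => //; left.
by move=> /IH [x' [y' [l1x' l2y' ->]]]; exists x', y'; split => //; right.
Qed.

Lemma bounded_cvg_integral {R : realType} {d : measure_display} {Omega : measurableType d}
    (P : probability Omega R) (f_ : nat -> Omega -> R) (f : Omega -> R) :
  (forall N, measurable_fun setT (f_ N)) ->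
  (forall w, \forall N \near \oo, f_ N w = f w) ->
  (forall N w, `|f_ N w| <= 1) ->
  P.-integrable setT (fun w => (f w)%:E) /\
  (\int[P]_w (f_ N w)%:E)%E @[N --> \oo] --> (\int[P]_w (f w)%:E)%E.
Proof.
move=> mf ev f1.
have mfE : forall N, measurable_fun setT (fun w => (f_ N w)%:E).
  by move=> N; apply/measurable_EFinP.
have f_f w : setT w -> (fun N => (f_ N w)%:E) @ \oo --> (f w)%:E.
  by move=> _; apply: cvg_near_cst; apply: filterS (ev w) => N ->.
have int1 : P.-integrable setT (cst 1%E : Omega -> \bar R).
  exact: (@finite_measure_integrable_cst _ _ _ P setT 1 measurableT).
have dom N w : setT w -> (`|(f_ N w)%:E| <= (cst 1%E : Omega -> \bar R) w)%E.
  by move=> _; rewrite /= lee_fin f1.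
split; last exact: (dominated_cvg measurableT mfE f_f _ int1 dom).
exact: (lebesgue_integral_dominated_convergence.dominated_integrable measurableT
  (fun N w => (f_ N w)%:E) (fun w => (f w)%:E) (cst 1%E) mfE f_f int1 dom).
Qed.

Section IndependentCylinders.
Context {R : realType} {d : measure_display} {Omega : measurableType d}.
Variable P : probability Omega R.
Context {I : eqType} {F : I -> set (set Omega)}.
Hypotheses (FT : forall a, F a setT)
  (FI : forall a A B, F a A -> F a B -> F a (A `&` B))
  (measurable_F : forall a A, F a A -> measurable A)
  (indepF : mutually_independent P F).

Local Notation wcyl := (R * (I -> set Omega))%type.

Definition cylinder (G : seq I) (A : I -> set Omega) : set Omega :=
  \big[setI/setT]_(a <- G) A a.

(* A list [l] of pairs [(c, A)] encodes the simple function
   [w |-> \sum_((c, A) <- l) c * \1_(cylinder G A) w] over the index list [G];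
   [cmean] is its expectation computed as if the events were independent.  The
   pairs contain sets, so membership in [l] is [List.In]. *)
Definition ceval (G : seq I) (l : seq wcyl) (w : Omega) : R :=
  \sum_(x <- l) x.1 * \1_(cylinder G x.2) w.

Definition cmean (G : seq I) (l : seq wcyl) : R :=
  \sum_(x <- l) x.1 * \prod_(a <- G) fine (P (x.2 a)).

Definition cadapted (l : seq wcyl) : Prop :=
  forall x, List.In x l -> forall a, F a (x.2 a).

Definition csupport (S : pred I) (l : seq wcyl) : Prop :=
  forall x, List.In x l -> forall a, ~~ S a -> x.2 a = setT.

Definition cmul (l1 l2 : seq wcyl) : seq wcyl :=
  [seq (x.1 * y.1, fun a => x.2 a `&` y.2 a) | x <- l1, y <- l2].

Definition cone : seq wcyl := [:: (1, fun _ => setT)].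

Definition catom (a0 : I) (c : R) (B : set Omega) : seq wcyl :=
  [:: (c, fun a => if a == a0 then B else setT)].

Lemma cylinderI G A B :
  cylinder G (fun a => A a `&` B a) = cylinder G A `&` cylinder G B.
Proof.
elim: G => [|a G IH]; first by rewrite /cylinder !big_nil setIT.
by rewrite /cylinder !big_cons -!/(cylinder _ _) IH setIACA.
Qed.

Lemma measurable_cylinder G A : (forall a, F a (A a)) -> measurable (cylinder G A).
Proof.
move=> FA; elim: G => [|a G IH]; first by rewrite /cylinder big_nil.
by rewrite /cylinder big_cons; apply: measurableI => //; apply: measurable_F.
Qed.

Lemma fine_probT : fine (P setT) = 1.
Proof. by rewrite probability_setT. Qed.

Lemma cevalM G l1 l2 w : ceval G (cmul l1 l2) w = ceval G l1 w * ceval G l2 w.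
Proof.
rewrite /ceval /cmul big_allpairs_dep /= mulr_suml; apply: eq_bigr => x _.
rewrite mulr_sumr; apply: eq_bigr => y _ /=.
by rewrite cylinderI indicI /=; ring.
Qed.

Lemma ceval_cat G l1 l2 w : ceval G (l1 ++ l2) w = ceval G l1 w + ceval G l2 w.
Proof. exact: big_cat. Qed.

Lemma ceval1 G w : ceval G cone w = 1.
Proof.
by rewrite /ceval big_seq1 /= /cylinder big1 // indicE mem_set // mul1r.
Qed.

Lemma cmean_cat G l1 l2 : cmean G (l1 ++ l2) = cmean G l1 + cmean G l2.
Proof. exact: big_cat. Qed.

Lemma cmean1 G : cmean G cone = 1.
Proof. by rewrite /cmean big_seq1 /= big1 ?mul1r // => a _; rewrite fine_probT. Qed.

Lemma ceval_flatten G (f : nat -> seq wcyl) s w :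
  ceval G (flatten [seq f n | n <- s]) w = \sum_(n <- s) ceval G (f n) w.
Proof.
elim: s => [|n s IH]; first by rewrite big_nil /ceval big_nil.
by rewrite /= ceval_cat IH big_cons.
Qed.

Lemma cmean_flatten G (f : nat -> seq wcyl) s :
  cmean G (flatten [seq f n | n <- s]) = \sum_(n <- s) cmean G (f n).
Proof.
elim: s => [|n s IH]; first by rewrite big_nil /cmean big_nil.
by rewrite /= cmean_cat IH big_cons.
Qed.

Lemma cmeanM G (S1 S2 : pred I) l1 l2 :
  csupport S1 l1 -> csupport S2 l2 -> (forall a, ~~ (S1 a && S2 a)) ->
  cmean G (cmul l1 l2) = cmean G l1 * cmean G l2.
Proof.
move=> sl1 sl2 S12.
rewrite /cmean /cmul big_allpairs_dep /= mulr_suml; apply: eq_big_In => x l1x.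
rewrite mulr_sumr; apply: eq_big_In => y l2y /=.
suff -> : \prod_(a <- G) fine (P (x.2 a `&` y.2 a)) =
    (\prod_(a <- G) fine (P (x.2 a))) * \prod_(a <- G) fine (P (y.2 a)) by ring.
rewrite -big_split /=; apply: eq_bigr => a _.
have := S12 a; case S1a : (S1 a) => /= S2a.
  by rewrite (sl2 y l2y a S2a) setIT fine_probT mulr1.
by rewrite (sl1 x l1x a (negbT S1a)) setTI fine_probT mul1r.
Qed.

Lemma cadaptedM l1 l2 : cadapted l1 -> cadapted l2 -> cadapted (cmul l1 l2).
Proof.
move=> al1 al2 z zin a; have [x [y [l1x l2y ->]]] := In_allpairs zin => /=.
by apply: FI; [apply: al1 | apply: al2].
Qed.

Lemma cadapted_cat l1 l2 : cadapted l1 -> cadapted l2 -> cadapted (l1 ++ l2).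
Proof. by move=> al1 al2 x /(List.in_app_or _ _ _) []; [apply: al1 | apply: al2]. Qed.

Lemma cadapted1 : cadapted cone.
Proof. by move=> x [<-|//] a; apply: FT. Qed.

Lemma cadapted_catom a0 c B : F a0 B -> cadapted (catom a0 c B).
Proof. by move=> FB x [<-|//] a /=; case: eqP => [->//|_]; apply: FT. Qed.

Lemma cadapted_flatten (f : nat -> seq wcyl) s :
  (forall n, cadapted (f n)) -> cadapted (flatten [seq f n | n <- s]).
Proof.
by move=> af; elim: s => [|n s IH] /=; [move=> ? [] | apply: cadapted_cat].
Qed.

Lemma csupportM S l1 l2 : csupport S l1 -> csupport S l2 -> csupport S (cmul l1 l2).
Proof.
move=> sl1 sl2 z zin a Sa; have [x [y [l1x l2y ->]]] := In_allpairs zin => /=.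
by rewrite (sl1 x l1x a Sa) (sl2 y l2y a Sa) setIT.
Qed.

Lemma csupport_cat S l1 l2 : csupport S l1 -> csupport S l2 -> csupport S (l1 ++ l2).
Proof. by move=> sl1 sl2 x /(List.in_app_or _ _ _) []; [apply: sl1 | apply: sl2]. Qed.

Lemma csupport1 S : csupport S cone.
Proof. by move=> x [<-|//]. Qed.

Lemma csupport_catom a0 c B : csupport (pred1 a0) (catom a0 c B).
Proof. by move=> x [<-|//] a /= /negbTE ->. Qed.

Lemma csupport_flatten S (f : nat -> seq wcyl) s :
  (forall n, csupport S (f n)) -> csupport S (flatten [seq f n | n <- s]).
Proof.
by move=> sf; elim: s => [|n s IH] /=; [move=> ? [] | apply: csupport_cat].
Qed.

Lemma csupportW (S S' : pred I) l :
  csupport S l -> (forall a, S a -> S' a) -> csupport S' l.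
Proof. by move=> sl SS' x lx a S'a; apply: sl => //; apply: contra S'a; apply: SS'. Qed.

Lemma ceval_pred1 a0 G l w : uniq G -> a0 \in G -> csupport (pred1 a0) l ->
  ceval G l w = \sum_(x <- l) x.1 * \1_(x.2 a0) w.
Proof.
move=> uG Ga0 sl; apply: eq_big_In => x lx; congr (_ * _).
rewrite /cylinder (bigD1_seq a0) //= big1 ?setIT // => a /negbTE a0a.
by apply: sl => //=; rewrite a0a.
Qed.

Lemma cmean_pred1 a0 G l : uniq G -> a0 \in G -> csupport (pred1 a0) l ->
  cmean G l = \sum_(x <- l) x.1 * fine (P (x.2 a0)).
Proof.
move=> uG Ga0 sl; apply: eq_big_In => x lx; congr (_ * _).
rewrite (bigD1_seq a0) //= big1 ?mulr1 // => a /negbTE a0a.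
by rewrite (sl x lx a) ?fine_probT //= a0a.
Qed.

Lemma ceval_catom a0 c B G w : uniq G -> a0 \in G ->
  ceval G (catom a0 c B) w = c * \1_B w.
Proof.
move=> uG Ga0; rewrite (ceval_pred1 w uG Ga0); last exact: csupport_catom.
by rewrite big_seq1 /= eqxx.
Qed.

Lemma cmean_catom a0 c B G : uniq G -> a0 \in G ->
  cmean G (catom a0 c B) = c * fine (P B).
Proof.
move=> uG Ga0; rewrite (cmean_pred1 uG Ga0); last exact: csupport_catom.
by rewrite big_seq1 /= eqxx.
Qed.

Lemma measurable_ceval G l : cadapted l -> measurable_fun setT (ceval G l).
Proof.
elim: l => [|x l IH] al.
  by rewrite /ceval; under eq_fun do rewrite big_nil; exact: measurable_cst.
rewrite /ceval; under eq_fun do rewrite big_cons.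
apply: measurable_funD; last by apply: IH => y ly; apply: al; right.
apply: measurable_funM; first exact: measurable_cst.
by apply/measurable_indic/measurable_cylinder/al; left.
Qed.

Lemma integrable_ceval G l : cadapted l -> P.-integrable setT (fun w => (ceval G l w)%:E).
Proof.
elim: l => [|x l IH] al.
  by rewrite /ceval; under eq_fun do rewrite big_nil; exact: integrable0.
rewrite /ceval; under eq_fun do rewrite big_cons EFinD EFinM.
apply: integrableD => //; last by apply: IH => y ly; apply: al; right.
by apply/integrableZl/integrable_indic/measurable_cylinder/al => //; left.
Qed.

Lemma integral_ceval G l : uniq G -> cadapted l ->
  (\int[P]_w (ceval G l w)%:E = (cmean G l)%:E)%E.
Proof.
move=> uG; elim: l => [|x l IH] al.
  by rewrite /ceval /cmean; under eq_integral do rewrite big_nil; rewrite integral0 big_nil.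
have Fx a : F a (x.2 a) by apply: al; left.
have al' : cadapted l by move=> y ly; apply: al; right.
have mx := measurable_cylinder G Fx.
rewrite /ceval /cmean; under eq_integral do rewrite big_cons EFinD EFinM.
rewrite integralD //; last 2 first.
- exact/integrableZl/integrable_indic.
- exact: integrable_ceval.
rewrite IH // big_cons EFinD integralZl ?integral_indic //; last exact: integrable_indic.
rewrite setIT EFinM -(indepF uG (fun a _ => Fx a)) fineK //.
exact: fin_num_measure.
Qed.

Lemma norm_cmean_le1 G l : uniq G -> cadapted l ->
  (forall w, `|ceval G l w| <= 1) -> `|cmean G l| <= 1.
Proof.
move=> uG al l1; rewrite -lee_fin -abse_EFin -integral_ceval //.
have mE : measurable_fun setT (fun w => (ceval G l w)%:E).
  exact/measurable_EFinP/measurable_ceval.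
apply: (le_trans (le_abse_integral _ _ mE)) => //.
apply: (@le_trans _ _ (\int[P]_w (cst 1%E w))%E).
  apply: ge0_le_integral => //; first exact: measurableT_comp.
  by move=> w _; rewrite abse_EFin lee_fin l1.
by rewrite integral_cst //= mul1e probability_setT.
Qed.

Definition trunc_pgf (X : Omega -> nat) (m : R) (N : nat) : R :=
  \sum_(n <- iota 0 N.+1) fine (P (X @^-1` [set n])) * m ^+ n.

Lemma cvg_trunc_pgf a0 (X : Omega -> nat) (m : R) :
  (forall n, F a0 (X @^-1` [set n])) -> `|m| <= 1 ->
  trunc_pgf X m N @[N --> \oo] --> fine (\int[P]_w (m ^+ X w)%:E)%E.
Proof.
move=> FX m1.
pose cX N := flatten [seq catom a0 (m ^+ n) (X @^-1` [set n]) | n <- iota 0 N.+1].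
have a0G : a0 \in [:: a0] := mem_head _ _.
have cX_adapted N : cadapted (cX N) by apply: cadapted_flatten => n; apply: cadapted_catom.
have cXE N w : ceval [:: a0] (cX N) w = (X w <= N)%:R * m ^+ X w.
  rewrite ceval_flatten -big_iota_indicator; apply: eq_bigr => n _.
  rewrite ceval_catom // indicE mulrC; congr (_ * _).
  by case: eqP => Xn; [rewrite mem_set | rewrite memNset].
have cX_ev w : \forall N \near \oo, ceval [:: a0] (cX N) w = m ^+ X w.
  by apply: filterS (nbhs_infty_ge (X w)) => N XN; rewrite cXE XN mul1r.
have cX_le1 N w : `|ceval [:: a0] (cX N) w| <= 1.
  rewrite cXE normrM mulr_ile1 ?normr_ge0 ?norm_expr_le1 //.
  by case: (_ <= _)%N; rewrite ?normr1 ?normr0.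
have [intX cvgX] :=
  bounded_cvg_integral P (fun N => measurable_ceval [:: a0] (cX_adapted N)) cX_ev cX_le1.
rewrite -(fineK (integrable_fin_num measurableT intX)) in cvgX.
suff -> : trunc_pgf X m = fine \o (fun N => \int[P]_w (ceval [:: a0] (cX N) w)%:E)%E.
  exact: fine_cvg cvgX.
apply: funext => N /=; rewrite integral_ceval //= cmean_flatten.
by apply: eq_bigr => n _; rewrite cmean_catom // mulrC.
Qed.

End IndependentCylinders.

Arguments cadapted {R d Omega I} F l.

Section INMAFactorisation.
Context {R : realType} {d : measure_display} {Omega : measurableType d}.
Variables (P : probability Omega R) (q1 q2 : nat) (eps : int -> int -> Omega -> nat)
  (Z : int -> int -> nat -> Omega -> nat -> nat -> bool).
Hypotheses (measurable_eps : forall s t (B : set nat), measurable (eps s t @^-1` B))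
  (measurable_Zvec : forall s t r (B : set {ffun 'I_q1.+1 * 'I_q2.+1 -> bool}),
      measurable (Zvec q1 q2 Z s t r @^-1` B))
  (eps_ident : forall s t (B : set nat), P (eps s t @^-1` B) = P (eps 0 0 @^-1` B))
  (Zvec_ident : forall s t r (B : set {ffun 'I_q1.+1 * 'I_q2.+1 -> bool}),
      P (Zvec q1 q2 Z s t r @^-1` B) = P (Zvec q1 q2 Z 0 0 0 @^-1` B))
  (indep : mutually_independent P (inma_events q1 q2 eps Z)).

Local Notation F := (inma_events q1 q2 eps Z).
Local Notation wcyl := (R * (inma_index -> set Omega))%type.

Lemma inma_eventsT a : F a setT.
Proof. by case: a => [[x y]|[[x y] r]]; exists setT. Qed.

Lemma inma_eventsI a A B : F a A -> F a B -> F a (A `&` B).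
Proof.
by case: a => [[x y]|[[x y] r]] [A' _ <-] [B' _ <-]; exists (A' `&` B');
  rewrite ?preimage_setI.
Qed.

Lemma measurable_inma_events a A : F a A -> measurable A.
Proof.
by case: a => [[x y]|[[x y] r]] [B _ <-]; [apply: measurable_eps | apply: measurable_Zvec].
Qed.

Lemma inma_events_eps L n : F (inl L) (eps L.1 L.2 @^-1` [set n]).
Proof. by case: L => x y; exists [set n]. Qed.

(* [Some (i, j)] selects the component [Z^(i,j)] of the thinning vectors,
   [None] an absent component whose bit is always 0. *)
Definition comp_ok (o : option (nat * nat)) : bool :=
  if o is Some (i, j) then (i <= q1)%N && (j <= q2)%N else true.

Definition comp_set (o : option (nat * nat)) : set {ffun 'I_q1.+1 * 'I_q2.+1 -> bool} :=
  if o is Some (i, j) then [set f : {ffun _ -> bool} | f (inord i, inord j)] else set0.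

Definition thin_event (L : int * int) r o : set Omega :=
  Zvec q1 q2 Z L.1 L.2 r @^-1` comp_set o.

Definition thin_bit (L : int * int) r o (w : Omega) : bool :=
  if o is Some (i, j) then Z L.1 L.2 r w i j else false.

Lemma thin_eventE L r o w : comp_ok o -> thin_event L r o w <-> thin_bit L r o w.
Proof.
case: o => [[i j] /andP[iq jq]|] /=; last by split.
by rewrite /thin_event /= /Zvec ffunE /= !inordK.
Qed.

Lemma indic_thin_event L r o w : comp_ok o ->
  \1_(thin_event L r o) w = (thin_bit L r o w)%:R :> R.
Proof.
move=> ok; rewrite indicE; case b: (thin_bit L r o w).
  by rewrite mem_set // thin_eventE // b.
by rewrite memNset // thin_eventE // b.
Qed.

Lemma inma_events_thin L r o : F (inr (L, r)) (thin_event L r o).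
Proof. by case: L => x y; exists (comp_set o). Qed.

Lemma prob_thin_event L r o : P (thin_event L r o) = P (thin_event (0, 0) 0 o).
Proof. exact: Zvec_ident. Qed.

Lemma prob_thin_eventI L r o1 o2 :
  P (thin_event L r o1 `&` thin_event L r o2) =
  P (thin_event (0, 0) 0 o1 `&` thin_event (0, 0) 0 o2).
Proof. by rewrite /thin_event -preimage_setI Zvec_ident preimage_setI. Qed.

Lemma thin_event0 i j : (i <= q1)%N -> (j <= q2)%N ->
  thin_event (0, 0) 0 (Some (i, j)) = [set w | Z 0 0 0%N w i j].
Proof.
by move=> iq jq; apply/funext => w; rewrite propeqE; apply: thin_eventE; apply/andP.
Qed.

Lemma thin_event_none L r : thin_event L r None = set0.
Proof. exact: preimage_set0. Qed.

(* The innovation at [(s - a, t - b)] is thinned by the component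
   [(a - i0, b - j0)] in [X_{s-i0,t-j0}], when that component exists. *)
Definition comp_at (i0 j0 : nat) (e : nat * nat) : option (nat * nat) :=
  if ((i0 <= e.1 < q1.+1 + i0) && (j0 <= e.2 < q2.+1 + j0))%N
  then Some (e.1 - i0, e.2 - j0)%N else None.

Lemma comp_at_ok i0 j0 e : comp_ok (comp_at i0 j0 e).
Proof. by rewrite /comp_at; case: ifP => //= ?; lia. Qed.

Lemma comp_at_in i0 j0 a b : (i0 <= a < q1.+1 + i0)%N -> (j0 <= b < q2.+1 + j0)%N ->
  comp_at i0 j0 (a, b) = Some (a - i0, b - j0)%N.
Proof. by rewrite /comp_at /= => -> ->. Qed.

Lemma comp_at_out i0 j0 a b : ~~ ((i0 <= a < q1.+1 + i0) && (j0 <= b < q2.+1 + j0))%N ->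
  comp_at i0 j0 (a, b) = None.
Proof. by rewrite /comp_at /= => /negbTE ->. Qed.

Lemma pgf_eps1 : pgf_eps P eps 1 = 1.
Proof.
rewrite /pgf_eps; under eq_integral do rewrite expr1n.
by rewrite integral_cst //= probability_setT mul1e.
Qed.

Lemma expr_inma_X (u : R) x y w : u ^+ inma_X q1 q2 eps Z x y w =
  \prod_(0 <= i < q1.+1) \prod_(0 <= j < q2.+1)
    \prod_(r < eps (x - i%:Z) (y - j%:Z) w) u ^+ Z (x - i%:Z) (y - j%:Z) r w i j.
Proof.
rewrite /inma_X (big_morph _ (exprD u) (expr0 u)); apply: eq_bigr => i _.
rewrite (big_morph _ (exprD u) (expr0 u)); apply: eq_bigr => j _.
exact: (big_morph _ (exprD u) (expr0 u)).
Qed.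

Variables u1 u2 : R.

(* [u ^+ b = 1 + (u - 1) * b] for a bit [b]. *)
Definition cbitpow (u : R) L r o : seq wcyl :=
  cone ++ catom (inr (L, r)) (u - 1) (thin_event L r o).

Definition cbitpow2 L r o1 o2 : seq wcyl :=
  cmul (cbitpow u1 L r o1) (cbitpow u2 L r o2).

Definition bit_pgf (o1 o2 : option (nat * nat)) : R :=
  1 + (u1 - 1) * fine (P (thin_event (0, 0) 0 o1))
    + (u2 - 1) * fine (P (thin_event (0, 0) 0 o2))
    + (u1 - 1) * (u2 - 1) * fine (P (thin_event (0, 0) 0 o1 `&` thin_event (0, 0) 0 o2)).

Lemma csupport_cbitpow u L r o : csupport (pred1 (inr (L, r))) (cbitpow u L r o).
Proof. exact/csupport_cat/csupport_catom/csupport1. Qed.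

Lemma cadapted_cbitpow u L r o : cadapted F (cbitpow u L r o).
Proof.
apply: cadapted_cat; first exact: cadapted1 inma_eventsT.
exact/(cadapted_catom inma_eventsT)/inma_events_thin.
Qed.

Lemma ceval_cbitpow G u L r o w : uniq G -> inr (L, r) \in G -> comp_ok o ->
  ceval G (cbitpow u L r o) w = u ^+ thin_bit L r o w.
Proof.
move=> uG LG ok; rewrite ceval_cat ceval1 ceval_catom // indic_thin_event //.
by case: (thin_bit L r o w) => /=; ring.
Qed.

Lemma csupport_cbitpow2 L r o1 o2 : csupport (pred1 (inr (L, r))) (cbitpow2 L r o1 o2).
Proof. exact/csupportM/csupport_cbitpow/csupport_cbitpow. Qed.

Lemma cadapted_cbitpow2 L r o1 o2 : cadapted F (cbitpow2 L r o1 o2).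
Proof. exact/(cadaptedM inma_eventsI)/cadapted_cbitpow/cadapted_cbitpow. Qed.

Lemma ceval_cbitpow2 G L r o1 o2 w : uniq G -> inr (L, r) \in G ->
  comp_ok o1 -> comp_ok o2 ->
  ceval G (cbitpow2 L r o1 o2) w = u1 ^+ thin_bit L r o1 w * u2 ^+ thin_bit L r o2 w.
Proof. by move=> *; rewrite cevalM !ceval_cbitpow. Qed.

Lemma cmean_cbitpow2 G L r o1 o2 : uniq G -> inr (L, r) \in G ->
  cmean P G (cbitpow2 L r o1 o2) = bit_pgf o1 o2.
Proof.
move=> uG LG; rewrite (cmean_pred1 P uG LG); last exact: csupport_cbitpow2.
rewrite /cbitpow2 /cmul /= !big_cons big_nil /= eqxx !setIT !setTI fine_probT.
by rewrite prob_thin_eventI !(prob_thin_event L r) /bit_pgf; ring.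
Qed.

Lemma norm_bit_pgf_le1 o1 o2 : `|u1| <= 1 -> `|u2| <= 1 ->
  comp_ok o1 -> comp_ok o2 -> `|bit_pgf o1 o2| <= 1.
Proof.
move=> u1_le1 u2_le1 ok1 ok2.
rewrite -(@cmean_cbitpow2 [:: inr ((0, 0), 0%N)] (0, 0) 0) ?mem_head //.
apply: (norm_cmean_le1 measurable_inma_events indep) => //.
  exact: cadapted_cbitpow2.
move=> w; rewrite ceval_cbitpow2 ?mem_head // normrM.
by rewrite mulr_ile1 ?normr_ge0 ?norm_expr_le1.
Qed.

Fixpoint cthin L o1 o2 n : seq wcyl :=
  if n is n'.+1 then cmul (cthin L o1 o2 n') (cbitpow2 L n' o1 o2) else cone.

Definition thin_indices (L : int * int) (n : nat) : pred inma_index :=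
  fun a => if a is inr (L', r) then (L' == L) && (r < n)%N else false.

Lemma csupport_cthin L o1 o2 n : csupport (thin_indices L n) (cthin L o1 o2 n).
Proof.
elim: n => [|n IH] /=; first exact: csupport1.
apply: csupportM.
  apply: (csupportW IH) => -[//|[L' r]] /= /andP[-> /ltnW //].
by apply: (csupportW (@csupport_cbitpow2 L n o1 o2)) => a /eqP -> /=; rewrite eqxx ltnSn.
Qed.

Lemma cadapted_cthin L o1 o2 n : cadapted F (cthin L o1 o2 n).
Proof.
elim: n => [|n IH] /=; first exact: cadapted1 inma_eventsT.
exact/(cadaptedM inma_eventsI)/cadapted_cbitpow2.
Qed.

Lemma cmean_cthin G L o1 o2 n : uniq G -> (forall r, (r < n)%N -> inr (L, r) \in G) ->
  cmean P G (cthin L o1 o2 n) = bit_pgf o1 o2 ^+ n.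
Proof.
move=> uG; elim: n => [|n IH] LG /=; first by rewrite cmean1 expr0.
rewrite (cmeanM P G (@csupport_cthin L o1 o2 n) (@csupport_cbitpow2 L n o1 o2)).
  by rewrite IH ?cmean_cbitpow2 ?exprSr ?LG // => r /ltnW /LG.
by move=> [//|[L' r]] /=; apply/negP => /andP[/andP[_ rn] /eqP[_ nr]]; rewrite nr ltnn in rn.
Qed.

Lemma ceval_cthin G L o1 o2 n w : uniq G -> (forall r, (r < n)%N -> inr (L, r) \in G) ->
  comp_ok o1 -> comp_ok o2 ->
  ceval G (cthin L o1 o2 n) w = \prod_(r < n) (u1 ^+ thin_bit L r o1 w * u2 ^+ thin_bit L r o2 w).
Proof.
move=> uG + ok1 ok2; elim: n => [|n IH] LG /=; first by rewrite ceval1 big_ord0.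
by rewrite cevalM IH ?ceval_cbitpow2 ?big_ord_recr ?LG // => r /ltnW /LG.
Qed.

(* The contribution of the site [L] to [u1 ^+ X_{s,t} * u2 ^+ X_{s-k,t-l}]. *)
Definition site_factor L o1 o2 (w : Omega) : R :=
  \prod_(r < eps L.1 L.2 w) (u1 ^+ thin_bit L r o1 w * u2 ^+ thin_bit L r o2 w).

Lemma norm_site_factor_le1 L o1 o2 w : `|u1| <= 1 -> `|u2| <= 1 ->
  `|site_factor L o1 o2 w| <= 1.
Proof.
move=> u1_le1 u2_le1; apply: norm_prod_le1 => r.
by rewrite normrM mulr_ile1 ?normr_ge0 ?norm_expr_le1.
Qed.

(* The truncation [\1_(eps_L <= N) * site_factor L o1 o2] as a simple function. *)
Definition csite L o1 o2 N : seq wcyl :=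
  flatten [seq cmul (catom (inl L) 1 (eps L.1 L.2 @^-1` [set n])) (cthin L o1 o2 n)
          | n <- iota 0 N.+1].

Definition inma_site (a : inma_index) : int * int :=
  match a with inl L => L | inr (L, _) => L end.

Lemma csupport_csite L o1 o2 N : csupport (fun a => inma_site a == L) (csite L o1 o2 N).
Proof.
apply: csupport_flatten => n; apply: csupportM.
  by apply: csupportW; [exact: csupport_catom | move=> a /eqP ->].
by apply: (csupportW (@csupport_cthin L o1 o2 n)) => -[//|[L' r]] /andP[].
Qed.

Lemma cadapted_csite L o1 o2 N : cadapted F (csite L o1 o2 N).
Proof.
apply: cadapted_flatten => n; apply: (cadaptedM inma_eventsI); last exact: cadapted_cthin.
exact/(cadapted_catom inma_eventsT)/inma_events_eps.
Qed.

Lemma cmean_csite G L o1 o2 N : uniq G -> inl L \in G ->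
  (forall r, (r < N)%N -> inr (L, r) \in G) ->
  cmean P G (csite L o1 o2 N) = trunc_pgf P (eps 0 0) (bit_pgf o1 o2) N.
Proof.
move=> uG LG LrG; rewrite cmean_flatten big_seq [RHS]big_seq; apply: eq_bigr => n.
rewrite mem_iota add0n ltnS => nN.
rewrite (cmeanM P G (@csupport_catom _ _ _ _ (inl L) 1 _) (@csupport_cthin L o1 o2 n)).
  rewrite cmean_catom // cmean_cthin // => [|r rn]; last exact/LrG/(leq_trans rn).
  by rewrite mul1r eps_ident.
by move=> [L'|[L' r]] /=; rewrite ?andbF.
Qed.

Lemma ceval_csite G L o1 o2 N w : uniq G -> inl L \in G ->
  (forall r, (r < N)%N -> inr (L, r) \in G) -> comp_ok o1 -> comp_ok o2 ->
  ceval G (csite L o1 o2 N) w = (eps L.1 L.2 w <= N)%:R * site_factor L o1 o2 w.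
Proof.
move=> uG LG LrG ok1 ok2; rewrite ceval_flatten.
rewrite -(big_iota_indicator (fun n => \prod_(r < n)
  (u1 ^+ thin_bit L r o1 w * u2 ^+ thin_bit L r o2 w))).
rewrite big_seq [RHS]big_seq; apply: eq_bigr => n; rewrite mem_iota add0n ltnS => nN.
rewrite cevalM ceval_catom // ceval_cthin // => [|r rn]; last exact/LrG/(leq_trans rn).
by rewrite mul1r indicE; case: eqP => epsn; [rewrite mem_set | rewrite memNset].
Qed.

Lemma cvg_trunc_pgf_eps m : `|m| <= 1 ->
  trunc_pgf P (eps 0 0) m N @[N --> \oo] --> pgf_eps P eps m.
Proof.
move=> m1; apply: (cvg_trunc_pgf inma_eventsT measurable_inma_events indep _ m1).
exact: (inma_events_eps (0, 0)).
Qed.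

Lemma cvg_prod_trunc_pgf (T : Type) (ls : seq T) (m : T -> R) :
  (forall e, `|m e| <= 1) ->
  (\prod_(e <- ls) trunc_pgf P (eps 0 0) (m e) N)%:E @[N --> \oo] -->
  (\prod_(e <- ls) pgf_eps P eps (m e))%:E.
Proof.
move=> m_le1; apply: cvg_EFin; first exact: nearW.
rewrite (_ : fine \o _ = fun N => \prod_(e <- ls) trunc_pgf P (eps 0 0) (m e) N) //.
by apply: (cvg_big mul_continuous) => e _; apply: cvg_trunc_pgf_eps.
Qed.

Section Sites.
Variables (T : eqType) (loc : T -> int * int) (o1 o2 : T -> option (nat * nat)).
Hypotheses (o1_ok : forall e, comp_ok (o1 e)) (o2_ok : forall e, comp_ok (o2 e)).

Definition csites (ls : seq T) N : seq wcyl :=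
  foldr (fun e acc => cmul (csite (loc e) (o1 e) (o2 e) N) acc) cone ls.

Definition sites_index (ls : seq T) N : seq inma_index :=
  undup ([seq inl (loc e) | e <- ls] ++ [seq inr (loc e, r) | e <- ls, r <- iota 0 N]).

Lemma sites_index_inl ls N e : e \in ls -> inl (loc e) \in sites_index ls N.
Proof. by move=> le; rewrite mem_undup mem_cat map_f. Qed.

Lemma sites_index_inr ls N e r : e \in ls -> (r < N)%N -> inr (loc e, r) \in sites_index ls N.
Proof.
move=> le rN; rewrite mem_undup mem_cat; apply/orP; right.
by apply: (allpairs_f (fun e r => inr (loc e, r))) => //; rewrite mem_iota.
Qed.

Lemma csupport_csites ls N : csupport (fun a => inma_site a \in map loc ls) (csites ls N).
Proof.
elim: ls => [|e ls IH] /=; first exact: csupport1.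
apply: csupportM.
  by apply: (csupportW (@csupport_csite (loc e) (o1 e) (o2 e) N)) => a /eqP ->; rewrite mem_head.
by apply: (csupportW IH) => a la; rewrite in_cons la orbT.
Qed.

Lemma cadapted_csites ls N : cadapted F (csites ls N).
Proof.
elim: ls => [|e ls IH] /=; first exact: cadapted1 inma_eventsT.
by apply: (cadaptedM inma_eventsI) => //; apply: cadapted_csite.
Qed.

Lemma cmean_csites ls0 ls N : {subset ls <= ls0} -> uniq (map loc ls) ->
  cmean P (sites_index ls0 N) (csites ls N) =
  \prod_(e <- ls) trunc_pgf P (eps 0 0) (bit_pgf (o1 e) (o2 e)) N.
Proof.
elim: ls => [|e ls IH] ls_ls0 /=; first by rewrite cmean1 big_nil.
case/andP=> e_ls uls.
have ls_ls0' : {subset ls <= ls0} by move=> x lx; apply: ls_ls0; rewrite in_cons lx orbT.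
have e_ls0 : e \in ls0 by apply: ls_ls0; rewrite mem_head.
rewrite (cmeanM P _ (@csupport_csite (loc e) (o1 e) (o2 e) N) (@csupport_csites ls N)).
  rewrite IH // big_cons cmean_csite ?undup_uniq ?sites_index_inl // => r rN.
  exact: sites_index_inr.
by move=> a; apply/negP => /andP[/eqP -> eLs]; rewrite eLs in e_ls.
Qed.

Lemma ceval_csites ls0 ls N w : {subset ls <= ls0} ->
  ceval (sites_index ls0 N) (csites ls N) w =
  \prod_(e <- ls) ((eps (loc e).1 (loc e).2 w <= N)%:R * site_factor (loc e) (o1 e) (o2 e) w).
Proof.
elim: ls => [|e ls IH] ls_ls0 /=; first by rewrite ceval1 big_nil.
have ls_ls0' : {subset ls <= ls0} by move=> x lx; apply: ls_ls0; rewrite in_cons lx orbT.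
have e_ls0 : e \in ls0 by apply: ls_ls0; rewrite mem_head.
rewrite cevalM IH // big_cons ceval_csite ?undup_uniq ?sites_index_inl // => r rN.
exact: sites_index_inr.
Qed.

Lemma integral_prod_site_factor ls :
  `|u1| <= 1 -> `|u2| <= 1 -> uniq (map loc ls) ->
  (\int[P]_w (\prod_(e <- ls) site_factor (loc e) (o1 e) (o2 e) w)%:E =
   (\prod_(e <- ls) pgf_eps P eps (bit_pgf (o1 e) (o2 e)))%:E)%E.
Proof.
move=> u1_le1 u2_le1 uls; pose f_ N := ceval (sites_index ls N) (csites ls N).
have f_ev w : \forall N \near \oo,
    f_ N w = \prod_(e <- ls) site_factor (loc e) (o1 e) (o2 e) w.
  apply: filterS (nbhs_infty_ge (\max_(e <- ls) eps (loc e).1 (loc e).2 w)) => N maxN.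
  rewrite /f_ ceval_csites // big_seq [RHS]big_seq; apply: eq_bigr => e le.
  suff -> : (eps (loc e).1 (loc e).2 w <= N)%N by rewrite mul1r.
  exact: leq_trans (@leq_bigmax_seq _ _ xpredT _ _ le _) maxN.
have f_le1 N w : `|f_ N w| <= 1.
  rewrite /f_ ceval_csites //; apply: norm_prod_le1 => e.
  rewrite normrM mulr_ile1 ?normr_ge0 ?norm_site_factor_le1 //.
  by case: (_ <= _)%N; rewrite ?normr1 ?normr0.
have mf N : measurable_fun setT (f_ N).
  exact: (measurable_ceval measurable_inma_events _ (@cadapted_csites ls N)).
have [_ cvg_f] := bounded_cvg_integral P mf f_ev f_le1.
have int_f : (fun N => \int[P]_w (f_ N w)%:E)%E =
    (fun N => (\prod_(e <- ls) trunc_pgf P (eps 0 0) (bit_pgf (o1 e) (o2 e)) N)%:E).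
  apply: funext => N.
  rewrite (integral_ceval measurable_inma_events indep) ?undup_uniq ?cmean_csites //.
  exact: cadapted_csites.
rewrite int_f in cvg_f.
have bit_pgf_le1 e : `|bit_pgf (o1 e) (o2 e)| <= 1 by exact: norm_bit_pgf_le1.
exact: cvg_unique cvg_f (cvg_prod_trunc_pgf (ls := ls) bit_pgf_le1).
Qed.

End Sites.

Variables (k l : nat) (s t : int).
Hypotheses (k_le : (k <= q1)%N) (l_le : (l <= q2)%N).

(* [grid] indexes the sites [(s - a, t - b)] of all the innovations feeding
   [X_{s,t}] or [X_{s-k,t-l}]. *)
Definition grid : seq (nat * nat) :=
  [seq (a, b) | a <- index_iota 0 (q1 + k).+1, b <- index_iota 0 (q2 + l).+1].

Definition grid_site (e : nat * nat) : int * int := (s - e.1%:Z, t - e.2%:Z).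

Lemma uniq_grid_site : uniq (map grid_site grid).
Proof.
rewrite map_inj_uniq; first by rewrite allpairs_uniq ?iota_uniq // => -[? ?] [? ?].
by move=> [a b] [a' b'] [/addrI/oppr_inj[->] /addrI/oppr_inj[->]].
Qed.

Lemma expr_inma_X_grid (u : R) i0 j0 w : (i0 <= k)%N -> (j0 <= l)%N ->
  u ^+ inma_X q1 q2 eps Z (s - i0%:Z) (t - j0%:Z) w =
  \prod_(0 <= a < (q1 + k).+1) \prod_(0 <= b < (q2 + l).+1)
    \prod_(r < eps (s - a%:Z) (t - b%:Z) w)
      u ^+ thin_bit (s - a%:Z, t - b%:Z) r (comp_at i0 j0 (a, b)) w.
Proof.
move=> i0k j0l; rewrite expr_inma_X.
rewrite [RHS](prod_window2 (n1 := q1.+1) (n2 := q2.+1) (i0 := i0) (j0 := j0)).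
- apply: eq_big_nat => a /andP[_ aq]; apply: eq_big_nat => b /andP[_ bq].
  rewrite comp_at_in ?addnK /=; [|lia|lia].
  have -> : s - (a + i0)%:Z = s - i0%:Z - a%:Z by rewrite PoszD opprD addrA addrAC.
  by have -> : t - (b + j0)%:Z = t - j0%:Z - b%:Z by rewrite PoszD opprD addrA addrAC.
- lia.
- lia.
- by move=> a b out; rewrite comp_at_out // big1 // => r _; rewrite expr0.
Qed.

Lemma inma_pgf_integrandE w :
  u1 ^+ inma_X q1 q2 eps Z s t w * u2 ^+ inma_X q1 q2 eps Z (s - k%:Z) (t - l%:Z) w =
  \prod_(e <- grid) site_factor (grid_site e) (comp_at 0 0 e) (comp_at k l e) w.
Proof.
rewrite /site_factor; under eq_bigr do rewrite big_split.
rewrite big_split /= /grid !big_allpairs /grid_site /=.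
by rewrite -(expr_inma_X_grid u2) // -(expr_inma_X_grid u1) // !subr0.
Qed.

Variable beta : nat -> nat -> R.
Hypothesis Z_bernoulli : forall i j, (i <= q1)%N -> (j <= q2)%N ->
  P [set w | Z 0 0 0%N w i j] = (beta i j)%:E.

Lemma bit_pgf_none : bit_pgf None None = 1.
Proof. by rewrite /bit_pgf !thin_event_none setI0 measure0 /=; ring. Qed.

Lemma bit_pgf_left i j : (i <= q1)%N -> (j <= q2)%N ->
  bit_pgf (Some (i, j)) None = 1 + beta i j * (u1 - 1).
Proof.
move=> iq jq; rewrite /bit_pgf thin_event_none setI0 measure0 thin_event0 //.
by rewrite Z_bernoulli //=; ring.
Qed.

Lemma bit_pgf_right i j : (i <= q1)%N -> (j <= q2)%N ->
  bit_pgf None (Some (i, j)) = 1 + beta i j * (u2 - 1).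
Proof.
move=> iq jq; rewrite /bit_pgf thin_event_none set0I measure0 thin_event0 //.
by rewrite Z_bernoulli //=; ring.
Qed.

Lemma bit_pgf_both i j i' j' : (i <= q1)%N -> (j <= q2)%N -> (i' <= q1)%N -> (j' <= q2)%N ->
  bit_pgf (Some (i, j)) (Some (i', j')) =
  1 + beta i j * (u1 - 1) + beta i' j' * (u2 - 1) + pZ P Z i j i' j' * (u1 - 1) * (u2 - 1).
Proof.
move=> iq jq i'q j'q; rewrite /bit_pgf !thin_event0 // !Z_bernoulli //= /pZ.
have -> : [set w | Z 0 0 0%N w i j] `&` [set w | Z 0 0 0%N w i' j'] =
    [set w | Z 0 0 0%N w i j && Z 0 0 0%N w i' j'].
  by apply/seteqP; split => w /= => [[-> ->]|/andP[]].
ring.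
Qed.

Local Notation grid_pgf a b :=
  (pgf_eps P eps (bit_pgf (comp_at 0 0 (a, b)) (comp_at k l (a, b)))).

Lemma prod_grid_rows_first :
  \prod_(0 <= a < k) \prod_(0 <= b < (q2 + l).+1) grid_pgf a b =
  \prod_(0 <= i < k) \prod_(0 <= j < q2.+1) pgf_eps P eps (1 + beta i j * (u1 - 1)).
Proof.
apply: eq_big_nat => a /andP[_ ak].
rewrite (@big_cat_nat _ _ _ q2.+1) //=; last lia.
rewrite [X in _ * X]prod_nat_eq1 ?mulr1 => [|b /andP[qb _]]; last first.
  by rewrite !comp_at_out ?bit_pgf_none ?pgf_eps1 //; lia.
apply: eq_big_nat => b /andP[_ bq].
by rewrite comp_at_in ?comp_at_out ?subn0 ?bit_pgf_left //; lia.
Qed.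

Lemma prod_grid_rows_shared :
  \prod_(k <= a < q1.+1) \prod_(0 <= b < (q2 + l).+1) grid_pgf a b =
    (\prod_(k <= i < q1.+1) \prod_(0 <= j < l)
       pgf_eps P eps (1 + beta i j * (u1 - 1)))
  * (\prod_(k <= i < q1.+1) \prod_(l <= j < q2.+1)
       pgf_eps P eps (1 + beta i j * (u1 - 1) + beta (i - k)%N (j - l)%N * (u2 - 1)
                      + pZ P Z i j (i - k)%N (j - l)%N * (u1 - 1) * (u2 - 1)))
  * (\prod_(k <= i < q1.+1) \prod_(q2.+1 <= j < (q2 + l).+1)
       pgf_eps P eps (1 + beta (i - k)%N (j - l)%N * (u2 - 1))).
Proof.
rewrite -!big_split /=; apply: eq_big_nat => a /andP[ka aq].
rewrite (@big_cat_nat _ _ _ l) //=; last lia.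
rewrite (@big_cat_nat _ _ _ q2.+1 l _ _ _ (leqW l_le)) //=; last lia.
rewrite mulrA; congr (_ * _ * _); apply: eq_big_nat => b /andP[lb bq].
- by rewrite comp_at_in ?comp_at_out ?subn0 ?bit_pgf_left //; lia.
- by rewrite !comp_at_in ?subn0 ?bit_pgf_both //; lia.
- by rewrite comp_at_out ?comp_at_in ?bit_pgf_right //; lia.
Qed.

Lemma prod_grid_rows_second :
  \prod_(q1.+1 <= a < (q1 + k).+1) \prod_(0 <= b < (q2 + l).+1) grid_pgf a b =
  \prod_(q1.+1 <= i < (q1 + k).+1) \prod_(l <= j < (q2 + l).+1)
    pgf_eps P eps (1 + beta (i - k)%N (j - l)%N * (u2 - 1)).
Proof.
apply: eq_big_nat => a /andP[qa aqk].
rewrite (@big_cat_nat _ _ _ l) //=; last lia.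
rewrite [X in X * _]prod_nat_eq1 ?mul1r => [|b /andP[_ bl]]; last first.
  by rewrite !comp_at_out ?bit_pgf_none ?pgf_eps1 //; lia.
apply: eq_big_nat => b /andP[lb bql].
by rewrite comp_at_out ?comp_at_in ?bit_pgf_right //; lia.
Qed.

Lemma prod_grid_bit_pgf :
  \prod_(e <- grid) pgf_eps P eps (bit_pgf (comp_at 0 0 e) (comp_at k l e)) =
    (\prod_(0 <= i < k) \prod_(0 <= j < q2.+1)
       pgf_eps P eps (1 + beta i j * (u1 - 1)))
  * (\prod_(k <= i < q1.+1) \prod_(0 <= j < l)
       pgf_eps P eps (1 + beta i j * (u1 - 1)))
  * (\prod_(q1.+1 <= i < (q1 + k).+1) \prod_(l <= j < (q2 + l).+1)
       pgf_eps P eps (1 + beta (i - k)%N (j - l)%N * (u2 - 1)))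
  * (\prod_(k <= i < q1.+1) \prod_(q2.+1 <= j < (q2 + l).+1)
       pgf_eps P eps (1 + beta (i - k)%N (j - l)%N * (u2 - 1)))
  * (\prod_(k <= i < q1.+1) \prod_(l <= j < q2.+1)
       pgf_eps P eps (1 + beta i j * (u1 - 1) + beta (i - k)%N (j - l)%N * (u2 - 1)
                      + pZ P Z i j (i - k)%N (j - l)%N * (u1 - 1) * (u2 - 1))).
Proof.
rewrite /grid big_allpairs (@big_cat_nat _ _ _ k) //=; last lia.
rewrite (@big_cat_nat _ _ _ q1.+1 k _ _ _ (leqW k_le)) //=; last lia.
by rewrite prod_grid_rows_first prod_grid_rows_shared prod_grid_rows_second; ring.
Qed.

End INMAFactorisation.

Theorem theorem1 (R : realType) (d : measure_display) (Omega : measurableType d)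
  (P : probability Omega R) (q1 q2 : nat) (beta : nat -> nat -> R)
  (eps : int -> int -> Omega -> nat)
  (Z : int -> int -> nat -> Omega -> nat -> nat -> bool) :
  (1 <= q1 + q2)%N ->
  (forall i j, (i <= q1)%N -> (j <= q2)%N -> 0 <= beta i j <= 1) ->
  (forall s t (B : set nat), measurable (eps s t @^-1` B)) ->
  (forall s t r (B : set {ffun 'I_q1.+1 * 'I_q2.+1 -> bool}),
      measurable (Zvec q1 q2 Z s t r @^-1` B)) ->
  (forall s t (B : set nat), P (eps s t @^-1` B) = P (eps 0 0 @^-1` B)) ->
  (\int[P]_w ((eps 0 0 w)%:R : R)%:E < +oo)%E ->
  (\int[P]_w (((eps 0 0 w)%:R : R) ^+ 2)%:E < +oo)%E ->
  (forall s t r (B : set {ffun 'I_q1.+1 * 'I_q2.+1 -> bool}),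
      P (Zvec q1 q2 Z s t r @^-1` B) = P (Zvec q1 q2 Z 0 0 0 @^-1` B)) ->
  (forall i j, (i <= q1)%N -> (j <= q2)%N ->
      P [set w | Z 0 0 0%N w i j] = (beta i j)%:E) ->
  mutually_independent P (inma_events q1 q2 eps Z) ->
  forall (k l : nat), (k <= q1)%N -> (l <= q2)%N ->
  forall (s t : int) (u1 u2 : R), -1 <= u1 <= 1 -> -1 <= u2 <= 1 ->
  (\int[P]_w (u1 ^+ inma_X q1 q2 eps Z s t w
              * u2 ^+ inma_X q1 q2 eps Z (s - k%:Z) (t - l%:Z) w)%:E
   = ((\prod_(0 <= i < k) \prod_(0 <= j < q2.+1)
         pgf_eps P eps (1 + beta i j * (u1 - 1)))
    * (\prod_(k <= i < q1.+1) \prod_(0 <= j < l)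
         pgf_eps P eps (1 + beta i j * (u1 - 1)))
    * (\prod_(q1.+1 <= i < (q1 + k).+1) \prod_(l <= j < (q2 + l).+1)
         pgf_eps P eps (1 + beta (i - k)%N (j - l)%N * (u2 - 1)))
    * (\prod_(k <= i < q1.+1) \prod_(q2.+1 <= j < (q2 + l).+1)
         pgf_eps P eps (1 + beta (i - k)%N (j - l)%N * (u2 - 1)))
    * (\prod_(k <= i < q1.+1) \prod_(l <= j < q2.+1)
         pgf_eps P eps (1 + beta i j * (u1 - 1) + beta (i - k)%N (j - l)%N * (u2 - 1)
                        + pZ P Z i j (i - k)%N (j - l)%N * (u1 - 1) * (u2 - 1))))%:E)%E.
Proof.
move=> _ _ meps mZ eps_id _ _ Z_id Z_bern indep k l kq1 lq2 s t u1 u2 u1b u2b.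
have u1_le1 : `|u1| <= 1 by rewrite ler_norml.
have u2_le1 : `|u2| <= 1 by rewrite ler_norml.
under eq_integral do rewrite (inma_pgf_integrandE eps Z u1 u2 s t kq1 lq2).
rewrite (integral_prod_site_factor meps mZ eps_id Z_id indep
  (comp_at_ok q1 q2 0 0) (comp_at_ok q1 q2 k l)) ?uniq_grid_site //.
by rewrite (prod_grid_bit_pgf eps u1 u2 kq1 lq2 Z_bern).
Qed.
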